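(* Let $G=(V,\mathcal{E})$, $(V_n)_{n\ge1}$ with $|V_n|=n$, couplings $J_{ij}=J_{ji}\ne0$ on edges, and boundary conditions $\kappa^{(n)}\in\{-1,1\}^{V\setminus V_n}$ be as in the context, with zero external field, and assume \[K:=\sup_{n\ge1}\max_{i\in V_n}\sum_{j\in V}|J_{ij}|<\infty\] (with $J_{ij}:=0$ for non-edges). Let $N$ be the number of vertices $i\in V_n$ such that $e_{ij}=0$ for every edge $\{i,j\}\in\mathcal{E}_n$ containing $i$, where $(\sigma,e)\sim\mu_{FKSW}$ (for the $n$-th system). Then there exist constants $c_1=c_1(K)>0$ and $C_2=C_2(K)<\infty$ depending only on $K$ such that for all $n\ge1$, \[\mu_{FKSW}(N\ge c_1n)\ge 1-C_2n^{-10}.\]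
   Context: For each $n$: $\mathcal{E}_n=\{\{i,j\}\in\mathcal{E}:i\in V_n\text{ or }j\in V_n\}$, assumed finite; $\mathcal{E}_n^+=\{\{i,j\}\in\mathcal{E}_n:J_{ij}>0\}$, $\mathcal{E}_n^-=\{\{i,j\}\in\mathcal{E}_n:J_{ij}<0\}$, $p_{ij}=1-e^{-|J_{ij}|}$. Spin configurations $\sigma\in\{-1,1\}^{V_n}$ are extended to $V$ by $\sigma_j=\kappa^{(n)}_j$ for $j\notin V_n$. For $\sigma\in\{-1,1\}^{V_n}$ and $e\in\{0,1\}^{\mathcal{E}_n}$, \[\mu_{FKSW}(\sigma,e)=Z^{-1}\prod_{\{i,j\}\in\mathcal{E}_n^+}\big((1-p_{ij})1_{e_{ij}=0}+p_{ij}1_{e_{ij}=1}1_{\sigma_i=\sigma_j}\big)\prod_{\{i,j\}\in\mathcal{E}_n^-}\big((1-p_{ij})1_{e_{ij}=0}+p_{ij}1_{e_{ij}=1}1_{\sigma_i\ne\sigma_j}\big),\] $Z$ the normalizing constant (the Edwards–Sokal coupling of the Ising model with couplings $J$ and boundary condition $\kappa^{(n)}$). *)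

From HB Require Import structures.
From mathcomp Require Import all_boot all_order all_algebra.
From mathcomp Require Import finmap.
From mathcomp Require Import reals sequences exp.

Set Implicit Arguments.
Unset Strict Implicit.
Unset Printing Implicit Defensive.

Import Order.TTheory GRing.Theory Num.Theory.
Local Open Scope ring_scope.
Local Open Scope fset_scope.

(* Graph G = (V, E): edges are abstract objects x : Ed with endpoints
   ends x = (i, j) (an arbitrary orientation of the unordered edge {i,j});
   the coupling on edge {i,j} is J x.  For the n-th system:
   Vn = V_n (finite set of vertices), En = E_n (finite set of edges with at
   least one endpoint in V_n), kappa = boundary condition kappa^(n) (only its
   values off V_n are used).  Spins are booleans: true = +1, false = -1;
   edge variables are booleans: true = 1, false = 0. *)
Section FKSW.
Variables (R : realType) (V Ed : choiceType) (ends : Ed -> V * V) (J : Ed -> R)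
  (Vn : {fset V}) (En : {fset Ed}) (kappa : V -> bool).

Definition spin (sigma : {ffun Vn -> bool}) (v : V) : bool :=
  match @insub V (fun w => w \in Vn) (fset_sub_type Vn) v with
  | Some w => sigma w
  | None => kappa v
  end.

Definition incident (v : V) (x : Ed) : bool :=
  ((ends x).1 == v) || ((ends x).2 == v).

Definition pedge (x : Ed) : R := 1 - expR (- `|J x|).

Definition edge_factor (sigma : {ffun Vn -> bool}) (b : bool) (x : Ed) : R :=
  if b then
    pedge x * (if 0 < J x then spin sigma (ends x).1 == spin sigma (ends x).2
               else spin sigma (ends x).1 != spin sigma (ends x).2)%:R
  else 1 - pedge x.

Definition fksw_weight (sigma : {ffun Vn -> bool}) (e : {ffun En -> bool}) : R :=
  \prod_(x : En) edge_factor sigma (e x) (val x).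

Definition fksw_Z : R :=
  \sum_(sigma : {ffun Vn -> bool}) \sum_(e : {ffun En -> bool}) fksw_weight sigma e.

Definition fksw_prob (A : {ffun Vn -> bool} -> {ffun En -> bool} -> bool) : R :=
  (\sum_(sigma : {ffun Vn -> bool}) \sum_(e : {ffun En -> bool} | A sigma e)
     fksw_weight sigma e) / fksw_Z.

Definition isolated_count (e : {ffun En -> bool}) : nat :=
  #|[set i : Vn | [forall x : En, incident (val i) (val x) ==> ~~ e x]]|.

(* sum_{j in V} |J_ij| for i in V_n (all edges at i lie in E_n) *)
Definition coupling_sum (i : V) : R :=
  \sum_(x : En | incident i (val x)) `|J (val x)|.

End FKSW.

(* Conditionally on the spins, the edge variables are independent and an edge x is
   closed with probability at least exp(-|J_x|); it suffices to bound the conditional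
   probability of {N < c1 n} uniformly in the spins.  Colour V_n with m ~ 8 K e^K colours
   so as to minimise the total |J| of monochromatic edges.  By local optimality every
   vertex has at most K/m of coupling weight towards its own colour, and by pigeonhole
   some colour class S has at least n/m vertices.  Call i in S sealed if all its edges
   leaving S are closed: these events are independent (the edge sets are disjoint) and
   have probability at least e^(-K), and a sealed vertex is isolated unless one of its
   edges inside S is open.  An exponential Chebyshev bound, weighting each sealed vertex
   by 1/2 and each endpoint of an open edge inside S by 2, gives P(N < c1 n | spins) <= e^(-c1 n),
   which is at most C2 n^(-10). *)
From HB Require Import structures.
From mathcomp Require Import all_boot all_order all_algebra.
From mathcomp Require Import finmap.
From mathcomp Require Import reals sequences exp.
From mathcomp Require Import lra ring.

Set Implicit Arguments.
Unset Strict Implicit.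
Unset Printing Implicit Defensive.

Import Order.TTheory GRing.Theory Num.Theory.
Local Open Scope ring_scope.

Lemma sum_ffun_bool_prod (R : comPzSemiRingType) (T : finType) (g : T -> bool -> R) :
  \sum_(e : {ffun T -> bool}) \prod_x g x (e x) = \prod_x (g x true + g x false).
Proof. by rewrite -bigA_distr_bigA; apply: eq_bigr => x _; rewrite big_bool. Qed.

Section ProductWeights.
Variables (R : numFieldType) (T : finType) (f : T -> bool -> R).
Hypothesis f0_gt0 : forall x, 0 < f x false.
Hypothesis f1_ge0 : forall x, 0 <= f x true.

Definition prodw (e : {ffun T -> bool}) : R := \prod_x f x (e x).
Definition prodZ : R := \sum_(e : {ffun T -> bool}) prodw e.
Definition prodE (h : {ffun T -> bool} -> R) : R :=
  (\sum_(e : {ffun T -> bool}) prodw e * h e) / prodZ.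

Lemma prodw_ge0 e : 0 <= prodw e.
Proof. by apply: prodr_ge0 => x _; case: (e x); [exact: f1_ge0 | exact/ltW/f0_gt0]. Qed.

Lemma prodZ_gt0 : 0 < prodZ.
Proof.
rewrite /prodZ /prodw sum_ffun_bool_prod; apply: prodr_gt0 => x _.
exact: ltr_wpDl (f1_ge0 x) (f0_gt0 x).
Qed.

Lemma prodZ_neq0 : prodZ != 0.
Proof. by rewrite gt_eqF // prodZ_gt0. Qed.

Lemma eq_prodE h h' : h =1 h' -> prodE h = prodE h'.
Proof. by move=> eqh; rewrite /prodE; under eq_bigr do rewrite eqh. Qed.

Lemma sum_prodw_mul h : \sum_e prodw e * h e = prodE h * prodZ.
Proof. by rewrite /prodE mulfVK // prodZ_neq0. Qed.

Lemma prodE_ge0 h : (forall e, 0 <= h e) -> 0 <= prodE h.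
Proof.
move=> h_ge0; apply: divr_ge0; last exact/ltW/prodZ_gt0.
by apply: sumr_ge0 => e _; apply: mulr_ge0 => //; apply: prodw_ge0.
Qed.

Lemma prodE1 : prodE (fun _ => 1) = 1.
Proof. by rewrite /prodE; under eq_bigr do rewrite mulr1; rewrite divff // prodZ_neq0. Qed.

Lemma prodE_affine (a b : R) h : prodE (fun e => a + b * h e) = a + b * prodE h.
Proof.
rewrite /prodE; under eq_bigr do rewrite mulrDr.
rewrite big_split /= -mulr_suml -/prodZ mulrDl mulrAC divff ?prodZ_neq0 // mul1r.
congr (_ + _); rewrite mulrA; congr (_ / _).
by rewrite mulr_sumr; apply: eq_bigr => e _; rewrite mulrCA.
Qed.

Lemma prodE_prod (g : T -> bool -> R) :
  prodE (fun e => \prod_x g x (e x)) =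
  \prod_x ((f x true * g x true + f x false * g x false) / (f x true + f x false)).
Proof.
rewrite /prodE /prodZ /prodw.
rewrite (eq_bigr (fun e : {ffun T -> bool} => \prod_x (f x (e x) * g x (e x)))); last first.
  by move=> e _; rewrite big_split.
by rewrite (sum_ffun_bool_prod (fun x b => f x b * g x b)) sum_ffun_bool_prod prodf_div.
Qed.

Definition depends_on (P : pred T) (F : {ffun T -> bool} -> R) :=
  forall e e' : {ffun T -> bool}, (forall x, P x -> e x = e' x) -> F e = F e'.

(* Exchanging the P-coordinates of two configurations preserves the product of their weights. *)
Lemma prodE_mul_indep P F G : depends_on P F -> depends_on (predC P) G ->
  prodE (fun e => F e * G e) = prodE F * prodE G.
Proof.
move=> dF dG.
pose mix (a b : {ffun T -> bool}) := [ffun x => if P x then a x else b x].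
pose swap (p : {ffun T -> bool} * {ffun T -> bool}) := (mix p.1 p.2, mix p.2 p.1).
have swapK : involutive swap.
  move=> [a b]; congr (_, _); apply/ffunP => x; rewrite !ffunE /=; by case: (P x).
have prodw_mix a b : prodw (mix a b) * prodw (mix b a) = prodw a * prodw b.
  rewrite /prodw -!big_split; apply: eq_bigr => x _; rewrite !ffunE.
  by case: (P x) => //; exact: mulrC.
have key : (\sum_e prodw e * (F e * G e)) * prodZ =
           (\sum_e prodw e * F e) * (\sum_e prodw e * G e).
  rewrite /prodZ !mulr_suml; under eq_bigr do rewrite mulr_sumr.
  under [RHS]eq_bigr do rewrite mulr_sumr.
  rewrite !pair_big /= [RHS](reindex_inj (can_inj swapK)).
  apply: eq_bigr => [[a b]] _ /=.
  have -> : F (mix a b) = F a by apply: dF => x Px; rewrite ffunE Px.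
  have -> : G (mix b a) = G a by apply: dG => x Px; rewrite ffunE (negbTE Px).
  by rewrite mulrACA prodw_mix; ring.
by rewrite /prodE mulf_div -key invfM mulrA mulfK ?prodZ_neq0.
Qed.

Lemma prodE_big_indep (I : eqType) (D : I -> pred T) (h : I -> {ffun T -> bool} -> R)
    (s : seq I) :
  uniq s -> (forall i, depends_on (D i) (h i)) ->
  (forall i j x, i != j -> D i x -> D j x -> False) ->
  prodE (fun e => \prod_(i <- s) h i e) = \prod_(i <- s) prodE (h i).
Proof.
move=> + hdep disjD; elim: s => [|a s IH] /=.
  by rewrite big_nil (@eq_prodE _ (fun _ => 1)) ?prodE1 // => e; rewrite big_nil.
case/andP=> a_notin_s uniq_s; rewrite big_cons -IH //.
rewrite (@eq_prodE _ (fun e => h a e * \prod_(i <- s) h i e)); last first.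
  by move=> e; rewrite big_cons.
apply: (@prodE_mul_indep (D a)) => // e e' eq_off_Da.
apply: eq_big_seq => i i_in_s; apply: hdep => x Dix; apply: eq_off_Da => /=.
apply/negP => Dax; apply: (disjD a i x) => //.
by apply: contraNneq a_notin_s => ->.
Qed.

End ProductWeights.

Lemma card_set_sum_nat (T : finType) (P : pred T) :
  #|[set x | P x]| = (\sum_x (P x : nat))%N.
Proof. by rewrite -sum1dep_card big_mkcond /=; apply: eq_bigr => x _; case: (P x). Qed.

Lemma sum_eq_Some_le1 (R : numDomainType) (m : nat) (o : option 'I_m) :
  \sum_(b : 'I_m) (o == Some b)%:R <= 1 :> R.
Proof.
case: o => [b0|]; last by rewrite big1.
rewrite (bigD1 b0) //= eqxx big1 ?addr0 // => b b_neq_b0.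
by rewrite /= (inj_eq (@Some_inj _)) eq_sym (negbTE b_neq_b0).
Qed.

Lemma exists_large_colour_class (T : finType) (m : nat) (a0 : 'I_m)
    (col : {ffun T -> 'I_m}) :
  exists a, (#|T| <= m * #|[set i | col i == a]|)%N.
Proof.
have [a _ a_max] := @arg_maxnP _ a0 xpredT (fun a => #|[set i | col i == a]|) isT.
exists a.
have -> : #|T| = (\sum_(b : 'I_m) #|[set i | col i == b]|)%N.
  under eq_bigr do rewrite card_set_sum_nat.
  rewrite exchange_big /= -sum1_card; apply: eq_bigr => i _.
  rewrite (bigD1 (col i)) //= eqxx big1 // => b b_neq.
  by rewrite eq_sym (negbTE b_neq).
apply: (@leq_trans (\sum_(b < m) #|[set i | col i == a]|)).
  by apply: leq_sum => b _; apply: a_max.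
by rewrite sum_nat_const card_ord.
Qed.

Section Colouring.
Variables (R : realType) (V Ed : choiceType) (ends : Ed -> V * V) (J : Ed -> R)
  (Vn : {fset V}) (En : {fset Ed}) (m : nat).
Hypothesis no_loop : forall x, (ends x).1 != (ends x).2.

Definition insVn (v : V) : option Vn := @insub V (fun w => w \in Vn) (fset_sub_type Vn) v.

Definition colour_of (col : {ffun Vn -> 'I_m}) (v : V) : option 'I_m := omap col (insVn v).

Definition monochromatic col (x : Ed) : bool :=
  (colour_of col (ends x).1 != None) && (colour_of col (ends x).1 == colour_of col (ends x).2).

Definition mono_cost col : R := \sum_(x : En) (monochromatic col (val x))%:R * `|J (val x)|.

Definition nbr (v : V) (x : Ed) : V := if (ends x).1 == v then (ends x).2 else (ends x).1.

Definition colour_weight col (v : V) (b : 'I_m) : R :=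
  \sum_(x : En | incident ends v (val x))
    (colour_of col (nbr v (val x)) == Some b)%:R * `|J (val x)|.

Lemma colour_of_val col (i : Vn) : colour_of col (val i) = Some (col i).
Proof. by rewrite /colour_of /insVn valK. Qed.

Lemma colour_of_update (col : {ffun Vn -> 'I_m}) (v : Vn) (b : 'I_m) (u : V) :
  colour_of [ffun w => if w == v then b else col w] u =
  if u == val v then Some b else colour_of col u.
Proof.
rewrite /colour_of /insVn; case: insubP => [w _ <- | u_notin] /=.
  by rewrite ffunE (inj_eq val_inj); case: (w == v).
by case: eqP => // u_eq; move: u_notin; rewrite u_eq (valP v).
Qed.

Lemma nbr_neq v x : incident ends v x -> nbr v x != v.
Proof.
rewrite /incident /nbr; move: (no_loop x); case: (ends x) => [e1 e2] /= e12.
by case: (eqVneq e1 v) => [<- | _ /= /eqP <-] //; rewrite eq_sym.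
Qed.

Lemma monochromatic_incident col v x : incident ends v x -> colour_of col v != None ->
  monochromatic col x = (colour_of col (nbr v x) == colour_of col v).
Proof.
rewrite /incident /monochromatic /nbr; move: (no_loop x).
case: (ends x) => [e1 e2] /= _.
case: (eqVneq e1 v) => [<- _ coloured | _ /= /eqP <- coloured]; first by rewrite coloured eq_sym.
by case: (eqVneq (colour_of col e1) (colour_of col e2)) => [-> | _]; rewrite ?coloured ?andbF.
Qed.

(* Recolouring v to b changes the cost only through the edges at v. *)
Lemma min_cost_local_opt (col : {ffun Vn -> 'I_m}) :
  (forall col', mono_cost col <= mono_cost col') ->
  forall (v : Vn) b, colour_weight col (val v) (col v) <= colour_weight col (val v) b.
Proof.
move=> col_min v b; pose col' := [ffun w => if w == v then b else col w].
have := col_min col'.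
rewrite /mono_cost (bigID (fun x : En => incident ends (val v) (val x))) /=.
rewrite [X in _ <= X](bigID (fun x : En => incident ends (val v) (val x))) /=.
have -> : \sum_(x : En | ~~ incident ends (val v) (val x))
            (monochromatic col' (val x))%:R * `|J (val x)| =
          \sum_(x : En | ~~ incident ends (val v) (val x))
            (monochromatic col (val x))%:R * `|J (val x)|.
  apply: eq_bigr => x; rewrite /monochromatic !colour_of_update /incident negb_or.
  by case/andP=> /negbTE -> /negbTE ->.
have -> : \sum_(x : En | incident ends (val v) (val x))
            (monochromatic col (val x))%:R * `|J (val x)| = colour_weight col (val v) (col v).
  apply: eq_bigr => x inc.
  by rewrite (monochromatic_incident (col:=col) inc) colour_of_val.
have -> : \sum_(x : En | incident ends (val v) (val x))
            (monochromatic col' (val x))%:R * `|J (val x)| = colour_weight col (val v) b.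
  apply: eq_bigr => x inc.
  rewrite (monochromatic_incident (col:=col') inc) ?colour_of_update ?eqxx //.
  by rewrite (negbTE (nbr_neq inc)).
by rewrite lerD2r.
Qed.

Lemma sum_colour_weight col u : \sum_b colour_weight col u b <= coupling_sum ends J En u.
Proof.
rewrite /colour_weight exchange_big /coupling_sum; apply: ler_sum => x _.
by rewrite -mulr_suml; apply: ler_piMl => //; apply: sum_eq_Some_le1.
Qed.

Lemma min_cost_colour_weight (col : {ffun Vn -> 'I_m}) (K : R) :
  (forall col', mono_cost col <= mono_cost col') ->
  (forall i : Vn, coupling_sum ends J En (val i) <= K) ->
  forall v : Vn, m%:R * colour_weight col (val v) (col v) <= K.
Proof.
move=> col_min coupling_le v; apply: le_trans (coupling_le v).
apply: le_trans (sum_colour_weight col (val v)).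
have -> : m%:R * colour_weight col (val v) (col v) =
          \sum_(b : 'I_m) colour_weight col (val v) (col v).
  by rewrite sumr_const card_ord mulr_natl.
by apply: ler_sum => b _; apply: min_cost_local_opt.
Qed.

(* A cost-minimising colouring, restricted to its largest colour class. *)
Lemma exists_sparse_colour_class (K : R) (a0 : 'I_m) :
  (forall i : Vn, coupling_sum ends J En (val i) <= K) ->
  exists (col : {ffun Vn -> 'I_m}) (a : 'I_m),
    (#|{: Vn}| <= m * #|[set i | col i == a]|)%N /\
    forall i, col i == a -> m%:R * colour_weight col (val i) a <= K.
Proof.
move=> coupling_le.
have [col _ col_min] := @arg_minP _ _ _ [ffun _ => a0] xpredT mono_cost isT.
have [a large] := exists_large_colour_class a0 col.
exists col, a; split=> // i /eqP <-.
by apply: min_cost_colour_weight => // col'; apply: col_min.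
Qed.

End Colouring.

Lemma sum_eq_val_le1 (T : choiceType) (A : {fset T}) (u : T) :
  (\sum_(i : A) (u == val i) <= 1)%N.
Proof.
case: (pickP (fun i : A => u == val i)) => [i0 u_eq | u_neq]; last first.
  by rewrite big1 // => i _; rewrite u_neq.
rewrite (bigD1 i0) //= u_eq big1 // => i i_neq.
by case: eqP => // u_i; case/eqP: i_neq; apply: val_inj; exact: etrans (esym u_i) (eqP u_eq).
Qed.

Lemma expr2n_le_expR (R : realType) (k : nat) : 2 ^+ k <= expR k%:R :> R.
Proof.
rewrite -[k%:R]mulr1 expRM_natl; apply: lerXn2r; rewrite ?nnegrE ?expR_ge0 //.
by have := expR_ge1Dx (1 : R); lra.
Qed.

Lemma pedge_ge0 (R : realType) (Ed : choiceType) (J : Ed -> R) x : 0 <= pedge J x.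
Proof. by rewrite /pedge subr_ge0 expR_le1 oppr_le0. Qed.

Lemma pedge_le_norm (R : realType) (Ed : choiceType) (J : Ed -> R) x : pedge J x <= `|J x|.
Proof. by rewrite /pedge; have := expR_ge1Dx (- `|J x|); lra. Qed.

Section ConditionalOnSpins.
Variables (R : realType) (V Ed : choiceType) (ends : Ed -> V * V) (J : Ed -> R)
  (Vn : {fset V}) (En : {fset Ed}) (kappa : V -> bool) (sigma : {ffun Vn -> bool})
  (m : nat) (col : {ffun Vn -> 'I_m}) (a : 'I_m).

Definition edge_law (x : En) (b : bool) : R := edge_factor ends J kappa sigma b (val x).

Lemma fksw_weightE e : fksw_weight ends J kappa sigma e = prodw edge_law e.
Proof. by []. Qed.

Lemma edge_law0 x : edge_law x false = expR (- `|J (val x)|).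
Proof. by rewrite /edge_law /edge_factor /pedge opprB addrC subrK. Qed.

Lemma edge_law0_gt0 x : 0 < edge_law x false.
Proof. by rewrite edge_law0 expR_gt0. Qed.

Lemma edge_law1_ge0 x : 0 <= edge_law x true.
Proof. by apply: mulr_ge0 => //; apply: pedge_ge0. Qed.

Lemma fksw_weight_ge0 (e : {ffun En -> bool}) : 0 <= fksw_weight ends J kappa sigma e.
Proof. exact: prodw_ge0 edge_law0_gt0 edge_law1_ge0 e. Qed.

Lemma edge_law_sum_gt0 x : 0 < edge_law x true + edge_law x false.
Proof. exact: ltr_wpDl (edge_law1_ge0 x) (edge_law0_gt0 x). Qed.

Lemma edge_law_sum_le1 x : edge_law x true + edge_law x false <= 1.
Proof.
rewrite /edge_law /edge_factor; set c := (X in _ * X%:R).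
have c_le1 : c%:R <= 1 :> R by rewrite lern1 leq_b1.
have := ler_piMr (pedge_ge0 J (val x)) c_le1; lra.
Qed.

Definition in_class (v : V) : bool := colour_of col v == Some a.
Definition internal (x : En) : bool := in_class (ends (val x)).1 && in_class (ends (val x)).2.
Definition exit_edge (i : Vn) (x : En) : bool := incident ends (val i) (val x) && ~~ internal x.
Definition exit_set (i : Vn) : pred En := [pred x | (col i == a) && exit_edge i x].
Definition sealed (i : Vn) (e : {ffun En -> bool}) : bool :=
  (col i == a) && [forall x, exit_edge i x ==> ~~ e x].
Definition sealed_count (e : {ffun En -> bool}) : nat := (\sum_i sealed i e)%N.
Definition internal_degree (x : En) : nat :=
  (\sum_(i : Vn) ((col i == a) && incident ends (val i) (val x) && internal x))%N.
Definition open_internal_degree (e : {ffun En -> bool}) : nat :=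
  (\sum_x internal_degree x * e x)%N.

Definition half_if_sealed (i : Vn) (e : {ffun En -> bool}) : R := 2^-1 ^+ sealed i e.
Definition half_pow_sealed (e : {ffun En -> bool}) : R := \prod_i half_if_sealed i e.
Definition two_pow_open (e : {ffun En -> bool}) : R := \prod_x 2 ^+ (internal_degree x * e x).
Definition markov_weight (t : R) (e : {ffun En -> bool}) : R :=
  expR t * (half_pow_sealed e * two_pow_open e).

Lemma in_class_val i : in_class (val i) = (col i == a).
Proof. by rewrite /in_class colour_of_val. Qed.

Lemma half_pow_sealedE e : half_pow_sealed e = 2^-1 ^+ sealed_count e.
Proof. by rewrite /half_pow_sealed /half_if_sealed prodrXr. Qed.

Lemma two_pow_openE e : two_pow_open e = 2 ^+ open_internal_degree e.
Proof. by rewrite /two_pow_open prodrXr. Qed.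

Lemma markov_weight_ge0 t e : 0 <= markov_weight t e.
Proof.
rewrite /markov_weight half_pow_sealedE two_pow_openE.
by rewrite !mulr_ge0 ?expR_ge0 ?exprn_ge0 ?invr_ge0.
Qed.

(* An exit edge has exactly one endpoint in the class, so distinct vertices have
   disjoint exit sets. *)
Lemma exit_set_disjoint i j x : i != j -> exit_set i x -> exit_set j x -> False.
Proof.
move=> i_neq_j /andP [ci /andP [inc_i not_int]] /andP [cj /andP [inc_j _]].
have vi_neq_vj : val i != val j by rewrite (inj_eq val_inj).
move: not_int inc_i inc_j; rewrite /internal /incident.
case: (ends (val x)) => [e1 e2] /= + /orP [] /eqP e_i /orP [] /eqP e_j.
- by move=> _; case/eqP: vi_neq_vj; exact: etrans (esym e_i) e_j.
- by rewrite e_i e_j !in_class_val ci cj.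
- by rewrite e_i e_j !in_class_val ci cj.
- by move=> _; case/eqP: vi_neq_vj; exact: etrans (esym e_i) e_j.
Qed.

Lemma depends_half_if_sealed i : depends_on (exit_set i) (half_if_sealed i).
Proof.
move=> e e' eq_exit; rewrite /half_if_sealed /sealed; case ci: (col i == a) => //=.
congr (_ ^+ nat_of_bool _); apply: eq_forallb => x; case ex: (exit_edge i x) => //=.
by rewrite eq_exit // /exit_set /= ci ex.
Qed.

Lemma depends_half_pow_sealed : depends_on (predC internal) half_pow_sealed.
Proof.
move=> e e' eq_ext; apply: eq_bigr => i _; apply: depends_half_if_sealed.
by move=> x /and3P [_ _ not_int]; apply: eq_ext.
Qed.

Lemma internal_degree0 x : ~~ internal x -> internal_degree x = 0%N.
Proof.
by move=> not_int; rewrite /internal_degree big1 // => i _; rewrite (negbTE not_int) andbF.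
Qed.

Lemma depends_two_pow_open : depends_on internal two_pow_open.
Proof.
move=> e e' eq_int; apply: eq_bigr => x _.
by case: (boolP (internal x)) => [/eq_int -> | /internal_degree0 ->].
Qed.

Lemma internal_degree_le2 x : (internal_degree x <= 2)%N.
Proof.
apply: (@leq_trans (\sum_(i : Vn) (((ends (val x)).1 == val i) + ((ends (val x)).2 == val i)))%N).
  apply: leq_sum => i _; rewrite /incident.
  by case: (col i == a); case: (_ == _); case: (_ == _); case: internal.
by rewrite big_split /= (leq_add (sum_eq_val_le1 _ _) (sum_eq_val_le1 _ _)).
Qed.

Definition closed_if_exit (i : Vn) (x : En) (b : bool) : R := if exit_edge i x && b then 0 else 1.

Lemma half_if_sealedE i e : col i == a ->
  half_if_sealed i e = 1 + (- 2^-1) * \prod_x closed_if_exit i x (e x).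
Proof.
move=> ci; rewrite /half_if_sealed /sealed ci /=.
case: (boolP [forall x, _]) => [closed | /forallPn [x]] /=.
  rewrite big1 ?expr1 ?mulr1; first lra.
  move=> x _; have := forallP closed x; rewrite /closed_if_exit.
  by case: (exit_edge i x) => //= /negbTE ->.
rewrite negb_imply negbK => open_exit.
by rewrite (bigD1 x) //= /closed_if_exit open_exit mul0r mulr0 addr0 expr0.
Qed.

Lemma edge_ratio_closed_if_exit i x :
  expR (if exit_edge i x then - `|J (val x)| else 0) <=
  (edge_law x true * closed_if_exit i x true + edge_law x false * closed_if_exit i x false) /
    (edge_law x true + edge_law x false).
Proof.
rewrite /closed_if_exit /=; case: (exit_edge i x) => /=.
  rewrite mulr0 add0r mulr1 -edge_law0 ler_pdivlMr ?edge_law_sum_gt0 //.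
  exact: ler_piMr (ltW (edge_law0_gt0 x)) (edge_law_sum_le1 x).
by rewrite !mulr1 divff ?expR0 // gt_eqF // edge_law_sum_gt0.
Qed.

(* Each vertex of the class is sealed with conditional probability at least [expR (- K)]. *)
Lemma prodE_half_if_sealed (K : R) i : coupling_sum ends J En (val i) <= K ->
  prodE edge_law (half_if_sealed i) <= expR ((col i == a)%:R * - (2^-1 * expR (- K))).
Proof.
have law0 := edge_law0_gt0; have law1 := edge_law1_ge0.
move=> coupling_le; case ci: (col i == a); last first.
  rewrite mul0r expR0 (@eq_prodE _ _ _ _ (fun _ => 1)) ?prodE1 // => e.
  by rewrite /half_if_sealed /sealed ci.
rewrite mul1r (eq_prodE _ (fun e => half_if_sealedE e ci)).
rewrite (prodE_affine law0 law1) (prodE_prod edge_law).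
apply: le_trans (expR_ge1Dx _).
suff : expR (- K) <= \prod_x ((edge_law x true * closed_if_exit i x true +
          edge_law x false * closed_if_exit i x false) / (edge_law x true + edge_law x false)).
  by lra.
apply: le_trans (_ : \prod_x expR (if exit_edge i x then - `|J (val x)| else 0) <= _); last first.
  by apply: ler_prod => x _; rewrite expR_ge0 edge_ratio_closed_if_exit.
rewrite -expR_sum ler_expR; apply: le_trans (_ : - coupling_sum ends J En (val i) <= _).
  by rewrite lerN2.
rewrite /coupling_sum big_mkcond -sumrN; apply: ler_sum => x _ /=.
rewrite /exit_edge; case: incident => /=; last by rewrite oppr0.
by case: internal; rewrite /= ?oppr0 // oppr_le0.
Qed.

Lemma edge_ratio_two_pow x :
  (edge_law x true * 2 ^+ (internal_degree x * true) +
     edge_law x false * 2 ^+ (internal_degree x * false)) /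
    (edge_law x true + edge_law x false) <=
  expR (2 * ((internal_degree x)%:R * `|J (val x)|)).
Proof.
have deg_le2 := internal_degree_le2 x.
have p_ge0 := pedge_ge0 J (val x); have p_le := pedge_le_norm J (val x).
rewrite muln1 muln0 expr0 mulr1 /edge_law /edge_factor.
case: (if _ then _ else _) => /=.
  rewrite !mulr1 subrKC divr1; apply: le_trans (expR_ge1Dx _).
  by move: deg_le2; case: (internal_degree x) => [|[|[|d]]] // _; rewrite ?expr0 ?expr1 ?expr2; lra.
rewrite mulr0 mul0r add0r divff; last by rewrite /pedge opprB addrC subrK gt_eqF ?expR_gt0.
by rewrite -[X in X <= _]expR0 ler_expR !mulr_ge0.
Qed.

Lemma prodE_two_pow_open :
  prodE edge_law two_pow_open <=
  expR (2 * \sum_x (internal_degree x)%:R * `|J (val x)|).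
Proof.
rewrite /two_pow_open (prodE_prod edge_law (fun x b => 2 ^+ (internal_degree x * b))).
rewrite mulr_sumr expR_sum.
apply: ler_prod => x _; rewrite edge_ratio_two_pow andbT.
apply: divr_ge0; last exact: ltW (edge_law_sum_gt0 x).
by rewrite addr_ge0 // mulr_ge0 ?exprn_ge0 ?edge_law1_ge0 ?(ltW (edge_law0_gt0 x)).
Qed.

Lemma internal_degree_weight_le (eps : R) :
  (forall i : Vn, col i == a -> colour_weight ends J En col (val i) a <= eps) ->
  \sum_x (internal_degree x)%:R * `|J (val x)| <= #|[set i | col i == a]|%:R * eps.
Proof.
move=> weight_le; rewrite card_set_sum_nat natr_sum mulr_suml /internal_degree.
under eq_bigr do rewrite natr_sum mulr_suml.
rewrite exchange_big /=; apply: ler_sum => i _.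
case ci: (col i == a) => /=; last by rewrite mul0r big1 // => x _; rewrite mul0r.
rewrite mul1r; apply: le_trans (weight_le i ci).
rewrite /colour_weight [X in _ <= X]big_mkcond /=; apply: ler_sum => x _.
case: incident => /=; last by rewrite mul0r.
case int: (internal x) => /=; last by rewrite mul0r mulr_ge0.
suff -> : colour_of col (nbr ends (val i) (val x)) == Some a by [].
by move: int; rewrite /internal /in_class /nbr; case: ifP => _ /andP [].
Qed.

Lemma sealed_le_isolated_or_open e i :
  (sealed i e <=
   [forall x : En, incident ends (val i) (val x) ==> ~~ e x] +
   \sum_x ((col i == a) && incident ends (val i) (val x) && internal x) * e x)%N.
Proof.
case: (boolP (sealed i e)) => [/andP [ci closed]|] //.
case: (boolP [forall x, _]) => // /forallPn [x]; rewrite negb_imply negbK => /andP [inc ex].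
have int : internal x.
  by have := forallP closed x; rewrite /exit_edge inc ex /= implybF negbK.
by rewrite (bigD1 x) //= ci inc int ex.
Qed.

Lemma sealed_count_le e :
  (sealed_count e <= isolated_count ends Vn e + open_internal_degree e)%N.
Proof.
rewrite /isolated_count card_set_sum_nat /open_internal_degree /internal_degree.
under [X in (_ <= _ + X)%N]eq_bigr do rewrite big_distrl /=.
rewrite exchange_big -big_split /=; apply: leq_sum => i _.
exact: sealed_le_isolated_or_open.
Qed.

Lemma markov_weight_ge1 t e : ~~ (t <= (isolated_count ends Vn e)%:R) ->
  1 <= markov_weight t e.
Proof.
rewrite -ltNge => N_lt_t.
rewrite /markov_weight half_pow_sealedE two_pow_openE exprVn mulrCA mulrC -mulrA.
have pow_gt0 : 0 < 2 ^+ sealed_count e :> R by apply: exprn_gt0.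
rewrite -[X in X <= _](@divff _ (2 ^+ sealed_count e)) ?gt_eqF // mulrA.
rewrite ler_pM2r ?invr_gt0 //.
apply: le_trans (_ : 2 ^+ (isolated_count ends Vn e + open_internal_degree e) <= _).
  by apply: ler_weXn2l; [rewrite ler1n | apply: sealed_count_le].
rewrite exprD ler_pM2r ?exprn_gt0 //.
by apply: le_trans (expr2n_le_expR _ _) _; rewrite ler_expR ltW.
Qed.

Lemma bad_mass_le t :
  \sum_(e : {ffun En -> bool} | ~~ (t <= (isolated_count ends Vn e)%:R))
     fksw_weight ends J kappa sigma e <=
  prodE edge_law (markov_weight t) * \sum_(e : {ffun En -> bool}) fksw_weight ends J kappa sigma e.
Proof.
have law0 := edge_law0_gt0; have law1 := edge_law1_ge0.
under eq_bigr do rewrite fksw_weightE.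
under [X in _ <= _ * X]eq_bigr do rewrite fksw_weightE.
rewrite -(sum_prodw_mul law0 law1).
rewrite [X in _ <= X](bigID (fun e => ~~ (t <= (isolated_count ends Vn e)%:R))) /=.
rewrite -[X in X <= _]addr0; apply: lerD.
  apply: ler_sum => e bad; rewrite -[X in X <= _]mulr1.
  by rewrite ler_wpM2l ?(prodw_ge0 law0 law1) ?markov_weight_ge1.
by apply: sumr_ge0 => e _; rewrite mulr_ge0 ?(prodw_ge0 law0 law1) ?markov_weight_ge0.
Qed.

(* Sealing depends only on exit edges and [two_pow_open] only on internal edges, so the
   factors are independent. *)
Lemma prodE_markov_weight_le (K eps t : R) :
  (forall i : Vn, coupling_sum ends J En (val i) <= K) ->
  (forall i : Vn, col i == a -> colour_weight ends J En col (val i) a <= eps) ->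
  prodE edge_law (markov_weight t) <=
  expR (t + #|[set i | col i == a]|%:R * - (2^-1 * expR (- K)) +
        2 * (#|[set i | col i == a]|%:R * eps)).
Proof.
have law0 := edge_law0_gt0; have law1 := edge_law1_ge0.
move=> coupling_le weight_le.
rewrite (eq_prodE _ (fun e => esym (add0r (markov_weight t e)))) (prodE_affine law0 law1) add0r.
rewrite (prodE_mul_indep law0 law1 depends_half_pow_sealed); last first.
  by move=> e e' eq_int; apply: depends_two_pow_open => x int; rewrite eq_int //= int.
rewrite /half_pow_sealed (prodE_big_indep law0 law1 (index_enum_uniq _)
  depends_half_if_sealed exit_set_disjoint).
rewrite !expRD -mulrA ler_wpM2l ?expR_ge0 //.
apply: ler_pM.
- by rewrite prodr_ge0 // => i _; rewrite prodE_ge0 // => e; rewrite exprn_ge0 ?invr_ge0.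
- by rewrite prodE_ge0 // => e; rewrite two_pow_openE exprn_ge0.
- apply: le_trans (_ : \prod_i expR ((col i == a)%:R * - (2^-1 * expR (- K))) <= _).
    apply: ler_prod => i _; rewrite prodE_half_if_sealed // andbT.
    by rewrite prodE_ge0 // => e; rewrite exprn_ge0 ?invr_ge0.
  by rewrite -expR_sum ler_expR -mulr_suml -natr_sum card_set_sum_nat.
- apply: le_trans prodE_two_pow_open _.
  by rewrite ler_expR ler_pM2l // internal_degree_weight_le.
Qed.

(* With the class weights below [expR (- K) / 8], the exponent above is at most [- t]. *)
Lemma cond_bad_mass_le (K t : R) :
  (forall i : Vn, coupling_sum ends J En (val i) <= K) ->
  (forall i : Vn, col i == a -> colour_weight ends J En col (val i) a <= expR (- K) / 8) ->
  t <= expR (- K) * #|[set i | col i == a]|%:R / 8 ->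
  \sum_(e : {ffun En -> bool} | ~~ (t <= (isolated_count ends Vn e)%:R))
     fksw_weight ends J kappa sigma e <=
  expR (- t) * \sum_(e : {ffun En -> bool}) fksw_weight ends J kappa sigma e.
Proof.
move=> coupling_le weight_le t_le.
apply: le_trans (bad_mass_le t) _; apply: ler_wpM2r.
  by apply: sumr_ge0 => e _; apply: fksw_weight_ge0.
apply: le_trans (prodE_markov_weight_le t coupling_le weight_le) _.
rewrite ler_expR; have : 0 <= expR (- K) * #|[set i | col i == a]|%:R.
  by rewrite mulr_ge0 ?expR_ge0.
lra.
Qed.

End ConditionalOnSpins.

Lemma fksw_prob_ge_cond (R : realType) (V Ed : choiceType) (ends : Ed -> V * V)
    (J : Ed -> R) (Vn : {fset V}) (En : {fset Ed}) (kappa : V -> bool)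
    (A : {ffun Vn -> bool} -> {ffun En -> bool} -> bool) (d : R) :
  (forall sigma, \sum_(e | ~~ A sigma e) fksw_weight ends J kappa sigma e <=
                 d * \sum_(e : {ffun En -> bool}) fksw_weight ends J kappa sigma e) ->
  1 - d <= fksw_prob ends J kappa A.
Proof.
move=> cond_le.
have Z_gt0 : 0 < fksw_Z ends J Vn En kappa.
  rewrite /fksw_Z (bigD1 [ffun _ => true]) //= ltr_wpDr ?sumr_ge0 // => [sigma _|].
    by rewrite sumr_ge0 // => e _; apply: fksw_weight_ge0.
  under eq_bigr do rewrite fksw_weightE.
  by apply: prodZ_gt0 => x; [exact: edge_law0_gt0 | exact: edge_law1_ge0].
have bad_le : \sum_sigma \sum_(e | ~~ A sigma e) fksw_weight ends J kappa sigma e <=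
              d * fksw_Z ends J Vn En kappa.
  by rewrite /fksw_Z mulr_sumr ler_sum.
rewrite /fksw_prob ler_pdivlMr //.
have -> : \sum_sigma \sum_(e | A sigma e) fksw_weight ends J kappa sigma e =
          fksw_Z ends J Vn En kappa -
          \sum_sigma \sum_(e | ~~ A sigma e) fksw_weight ends J kappa sigma e.
  rewrite /fksw_Z -sumrB; apply: eq_bigr => sigma _.
  by rewrite [X in _ = X - _](bigID (A sigma)) /= addrK.
lra.
Qed.

Lemma expRN_le_inv_pow (R : realType) (c : R) (n k : nat) : 0 < c -> (0 < n)%N -> (0 < k)%N ->
  expR (- (c * n%:R)) <= (k%:R / c) ^+ k / n%:R ^+ k.
Proof.
move=> c_gt0 n_gt0 k_gt0.
have n_gt0' : 0 < n%:R :> R by rewrite ltr0n.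
have k_gt0' : 0 < k%:R :> R by rewrite ltr0n.
set y := c * n%:R / k%:R.
have y_gt0 : 0 < y by rewrite /y !mulr_gt0 ?invr_gt0.
have -> : expR (- (c * n%:R)) = (expR y ^+ k)^-1.
  by rewrite -expRM_natl -expRN /y; congr expR; field; rewrite gt_eqF.
have -> : (k%:R / c) ^+ k / n%:R ^+ k = (y ^+ k)^-1.
  rewrite -exprVn -exprVn -exprMn; congr (_ ^+ _); rewrite /y; field.
  by rewrite !gt_eqF.
rewrite lef_pV2 ?posrE ?exprn_gt0 ?expR_gt0 // lerXn2r ?nnegrE ?expR_ge0 ?ltW //.
by have := expR_ge1Dx y; lra.
Qed.

Local Open Scope fset_scope.

Theorem mainTheorem6 (R : realType) (K : R) :
  exists c1 : R, 0 < c1 /\ exists C2 : R,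
  forall (V Ed : choiceType) (ends : Ed -> V * V) (J : Ed -> R)
         (Vn : nat -> {fset V}) (En : nat -> {fset Ed})
         (kappa : nat -> V -> bool),
    (forall x, (ends x).1 != (ends x).2) ->
    (forall x y, ends x = ends y \/ ends x = ((ends y).2, (ends y).1) -> x = y) ->
    (forall x, J x != 0) ->
    (forall n, #|` Vn n| = n) ->
    (forall n x, (x \in En n) = ((ends x).1 \in Vn n) || ((ends x).2 \in Vn n)) ->
    (forall n i, (0 < n)%N -> i \in Vn n -> @coupling_sum R V Ed ends J (En n) i <= K) ->
    (forall K' : R, (forall n i, (0 < n)%N -> i \in Vn n ->
                       @coupling_sum R V Ed ends J (En n) i <= K') -> K <= K') ->
    forall n : nat, (0 < n)%N ->
      @fksw_prob R V Ed ends J (Vn n) (En n) (kappa n)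
        (fun _ e => c1 * n%:R <= (@isolated_count V Ed ends (Vn n) (En n) e)%:R)
      >= 1 - C2 / n%:R ^+ 10.
Proof.
set q := expR (- `|K|); have q_gt0 : 0 < q := expR_gt0 _.
pose m := (Num.Def.archi_bound (8 * `|K| / q)).+1.
have m_gt0 : 0 < m%:R :> R by rewrite ltr0n.
have m_large : 8 * `|K| <= m%:R * q.
  have bound : 8 * `|K| / q < (Num.Def.archi_bound (8 * `|K| / q))%:R.
    by apply: archi_boundP; apply: divr_ge0; [apply: mulr_ge0 | apply: ltW].
  by rewrite -ler_pdivrMr // ltW // (lt_le_trans bound) // ler_nat.
pose c1 := q / (8 * m%:R); have c1_gt0 : 0 < c1 by rewrite divr_gt0 ?mulr_gt0.
exists c1; split=> //; exists ((10 / c1) ^+ 10).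
move=> V Ed ends J Vn En kappa no_loop _ _ card_Vn _ coupling_le _ n n_gt0.
have coupling_le_K (i : Vn n) : coupling_sum ends J (En n) (val i) <= `|K|.
  exact: le_trans (coupling_le n (val i) n_gt0 (valP i)) (ler_norm K).
have [col [a [large sparse]]] :=
  exists_sparse_colour_class no_loop (ord0 : 'I_m) coupling_le_K.
have weight_le i : col i == a -> colour_weight ends J (En n) col (val i) a <= expR (- `|K|) / 8.
  move=> /sparse; rewrite -/q; have := m_large; nra.
apply: le_trans (fksw_prob_ge_cond (d := expR (- (c1 * n%:R))) _).
  by rewrite lerD2l lerN2 expRN_le_inv_pow.
move=> sigma; apply: cond_bad_mass_le coupling_le_K weight_le _.
have n_le : n%:R <= m%:R * #|[set i | col i == a]|%:R :> R.
  by rewrite -natrM ler_nat; move: large; rewrite -cardfE card_Vn.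
rewrite -/q /c1 mulrAC ler_pdivrMr ?mulr_gt0 //.
have -> : q * #|[set i | col i == a]|%:R / 8 * (8 * m%:R) =
          q * (m%:R * #|[set i | col i == a]|%:R) by field.
by rewrite ler_pM2l.
Qed.
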